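(* Let ${\bf D}$ be an $L\times N$ complex matrix with $L=Rd$, $N=Md$, partitioned into consecutive column-blocks ${\bf D}[1],\dots,{\bf D}[M]$ of size $L\times d$ with ${\bf D}^H[\ell]{\bf D}[\ell]={\bf I}_d$ for all $\ell$, and assume ${\bf D}{\bf g}\neq{\bf 0}$ for every nonzero block $2k$-sparse ${\bf g}\in\mathbb{C}^N$. Let ${\bf x}_0\in\mathbb{C}^N$ be block $k$-sparse, ${\bf y}={\bf D}{\bf x}_0$, and let $\mu_{\mathrm B}>0$ be the block-coherence of ${\bf D}$. If $kd<\frac12(\mu_{\mathrm B}^{-1}+d)$, then, running BMP on ${\bf y}$: (1) BMP picks a correct block (a block ${\bf D}[\ell]$ with $\|{\bf x}_0[\ell]\|_2>0$) in each step; (2) the residuals satisfy $\|{\bf r}_\ell\|_2^2\le\beta^\ell\|{\bf r}_0\|_2^2$ for all $\ell\ge0$, where $\beta=1-\frac{1-(k-1)d\mu_{\mathrm B}}{k}$.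
   Context: Vectors in $\mathbb{C}^N$ are viewed as concatenations of consecutive length-$d$ blocks ${\bf x}[1],\dots,{\bf x}[M]$; block $k$-sparse means at most $k$ blocks have nonzero Euclidean norm. $\rho(\cdot)$ is the spectral norm. Block-coherence: $\mu_{\mathrm B}=\max_{\ell,r\neq\ell}\frac1d\rho({\bf D}^H[\ell]{\bf D}[r])$. BMP (block matching pursuit): initialize ${\bf r}_0={\bf y}$; at stage $\ell\ge1$ choose $i_\ell=\arg\max_i\|{\bf D}^H[i]{\bf r}_{\ell-1}\|_2$ and update ${\bf r}_\ell={\bf r}_{\ell-1}-{\bf D}[i_\ell]{\bf D}^H[i_\ell]{\bf r}_{\ell-1}$. *)

From HB Require Import structures.
From mathcomp Require Import all_boot all_order all_algebra.
From mathcomp Require Import complex.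
From mathcomp Require Import all_classical all_reals.
Set Implicit Arguments. Unset Strict Implicit. Unset Printing Implicit Defensive.
Import Order.TTheory GRing.Theory Num.Theory.
Local Open Scope ring_scope.
Local Open Scope classical_set_scope.

Section BlockDefs.
Variable R : realType.
Local Notation C := R[i].

(* global index of entry j (0-based) of block l (0-based): l*d + j *)
Lemma blk_idx_proof (M d : nat) (l : 'I_M) (j : 'I_d) : (l * d + j < M * d)%N.
Proof.
case: l j => l hl [j hj] /=.
apply: (leq_trans (n := l * d + d)); first by rewrite ltn_add2l.
by rewrite -mulSnr leq_mul2r hl orbT.
Qed.

Definition blk_idx (M d : nat) (l : 'I_M) (j : 'I_d) : 'I_(M * d) :=
  Ordinal (blk_idx_proof l j).

Definition colblk (L M d : nat) (D : 'M[C]_(L, M * d)) (l : 'I_M) : 'M[C]_(L, d) :=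
  \matrix_(i < L, j < d) D i (blk_idx l j).

Definition vblk (M d : nat) (x : 'cV[C]_(M * d)) (l : 'I_M) : 'cV[C]_d :=
  \col_(j < d) x (blk_idx l j) 0.

Definition adjmx (m n : nat) (A : 'M[C]_(m, n)) : 'M[C]_(n, m) :=
  (map_mx (@conjc R) A)^T.

Definition vnorm2 (n : nat) (v : 'cV[C]_n) : R :=
  \sum_(i < n) (ComplexField.Normc.normc (v i 0)) ^+ 2.
Definition vnorm (n : nat) (v : 'cV[C]_n) : R := Num.sqrt (vnorm2 v).

Definition specnorm (m n : nat) (A : 'M[C]_(m, n)) : R :=
  sup [set vnorm (A *m v) | v in [set v : 'cV[C]_n | vnorm v <= 1]].

Definition block_coherence (L M d : nat) (D : 'M[C]_(L, M * d)) : R :=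
  \big[Num.max/0]_(l < M) \big[Num.max/0]_(r < M | r != l)
     ((d%:R)^-1 * specnorm (adjmx (colblk D l) *m colblk D r)).

Definition block_sparse (M d k : nat) (x : 'cV[C]_(M * d)) : Prop :=
  (#|[pred l : 'I_M | vnorm (vblk x l) != 0%R]| <= k)%N.

(* Ties in the argmax may be broken arbitrarily. *)
Definition BMP_run (L M d : nat) (D : 'M[C]_(L, M * d)) (y : 'cV[C]_L)
    (idx : nat -> 'I_M) (r : nat -> 'cV[C]_L) : Prop :=
  r 0%N = y /\
  forall l : nat, (0 < l)%N ->
    (forall i : 'I_M,
        vnorm (adjmx (colblk D i) *m r l.-1)
          <= vnorm (adjmx (colblk D (idx l)) *m r l.-1)) /\
    r l = r l.-1 - colblk D (idx l) *m (adjmx (colblk D (idx l)) *m r l.-1).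

End BlockDefs.

From HB Require Import structures.
From mathcomp Require Import all_boot all_order all_algebra.
From mathcomp Require Import complex.
From mathcomp Require Import all_classical all_reals.
From mathcomp Require Import ring lra.
Import Order.TTheory GRing.Theory Num.Theory.
Local Open Scope ring_scope.
Local Open Scope complex_scope.

(** Let S be the set of blocks in the support of x0.  As long as BMP picks
    blocks of S, every residual has the form r = \sum_(t in S) D[t] z_t.  For
    such r, orthonormality of the blocks and the coherence bound give
    ||D^H[j] r - z_j|| <= d mu \sum_(t != j) ||z_t||.  With m = max_t ||z_t||,
    a block of S attaining m therefore has correlation at least
    (1 - (k-1) d mu) m, whereas a block outside S has correlation at most
    k d mu m; the hypothesis (2k-1) d mu < 1 forces BMP to pick a block of S,
    which keeps the residual of the above form.  Since D[i] has orthonormal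
    columns, ||r_l||^2 = ||r_(l-1)||^2 - ||D^H[i] r_(l-1)||^2, and the bounds
    ||r||^2 = \sum_t <D^H[t] r, z_t> <= k m max_j ||D^H[j] r|| and
    (1 - (k-1) d mu) m <= max_j ||D^H[j] r|| give the contraction factor. *)

Lemma sqr_sum_mul_le {R : realFieldType} {n} (a b : 'I_n -> R) :
  (\sum_i a i * b i) ^+ 2 <= (\sum_i a i ^+ 2) * (\sum_i b i ^+ 2).
Proof.
have lagrange : \sum_i \sum_j (a i * b j - a j * b i) ^+ 2 =
    2 * ((\sum_i a i ^+ 2) * (\sum_i b i ^+ 2) - (\sum_i a i * b i) ^+ 2).
  rewrite (eq_bigr (fun i => a i ^+ 2 * (\sum_j b j ^+ 2)
      + b i ^+ 2 * (\sum_j a j ^+ 2) - 2 * (a i * b i * (\sum_j a j * b j)))).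
    by rewrite sumrB big_split /= -!mulr_suml -mulr_sumr -mulr_suml; ring.
  move=> i _; rewrite !mulr_sumr -big_split -sumrB /=.
  by apply: eq_bigr => j _; ring.
have : 0 <= \sum_i \sum_j (a i * b j - a j * b i) ^+ 2.
  by apply: sumr_ge0 => i _; apply: sumr_ge0 => j _; exact: sqr_ge0.
rewrite lagrange; lra.
Qed.

Lemma sum_mul_le_sqrt {R : rcfType} {n} (a b : 'I_n -> R) :
  \sum_i a i * b i <= Num.sqrt (\sum_i a i ^+ 2) * Num.sqrt (\sum_i b i ^+ 2).
Proof.
apply: le_trans (ler_norm _) _.
rewrite -sqrtr_sqr -sqrtrM; last by apply: sumr_ge0 => i _; exact: sqr_ge0.
by apply: ler_wsqrtr; exact: sqr_sum_mul_le.
Qed.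

Section ComplexVectors.
Context {R : realType}.
Local Notation C := R[i].
Local Notation normc := (@ComplexField.Normc.normc R).

Lemma normc_ge0 (z : C) : 0 <= normc z.
Proof. by case: z => a b; exact: sqrtr_ge0. Qed.

Lemma normc_real (x : R) : normc x%:C = `|x|.
Proof. by rewrite /= expr0n /= addr0 sqrtr_sqr. Qed.

Lemma normc_conj (z : C) : normc z^* = normc z.
Proof. by case: z => a b /=; rewrite sqrrN. Qed.

Lemma normc_sum_le {I : finType} (P : pred I) (F : I -> C) :
  normc (\sum_(i | P i) F i) <= \sum_(i | P i) normc (F i).
Proof. by rewrite -lecR rmorph_sum /=; exact: (ler_norm_sum _ F P). Qed.

Lemma normc_sqr (z : C) : (normc z ^+ 2)%:C = z * z^*.
Proof. by rewrite rmorphXn -normCK. Qed.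

Lemma adjmxE {m n} (A : 'M[C]_(m, n)) i j : adjmx A i j = (A j i)^*.
Proof. by rewrite /adjmx !mxE. Qed.

Lemma adjmxM {m n p} (A : 'M[C]_(m, n)) (B : 'M[C]_(n, p)) :
  adjmx (A *m B) = adjmx B *m adjmx A.
Proof. by rewrite /adjmx map_mxM trmx_mul. Qed.

Lemma adjmxK {m n} (A : 'M[C]_(m, n)) : adjmx (adjmx A) = A.
Proof. by apply/matrixP => i j; rewrite !adjmxE conjcK. Qed.

Lemma adjmxB {m n} (A B : 'M[C]_(m, n)) : adjmx (A - B) = adjmx A - adjmx B.
Proof. by apply/matrixP => i j; rewrite !(adjmxE, mxE) rmorphB. Qed.

Lemma adjmx_mul_col {n} (u v : 'cV[C]_n) :
  (adjmx u *m v) 0 0 = \sum_i (u i 0)^* * v i 0.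
Proof. by rewrite mxE; apply: eq_bigr => i _; rewrite adjmxE. Qed.

Lemma vnorm2_ge0 {n} (v : 'cV[C]_n) : 0 <= vnorm2 v.
Proof. by apply: sumr_ge0 => i _; rewrite exprn_ge0 ?normc_ge0. Qed.

Lemma vnorm_ge0 {n} (v : 'cV[C]_n) : 0 <= vnorm v.
Proof. exact: sqrtr_ge0. Qed.

Lemma sqr_vnorm {n} (v : 'cV[C]_n) : vnorm v ^+ 2 = vnorm2 v.
Proof. by rewrite sqr_sqrtr // vnorm2_ge0. Qed.

Lemma vnorm2_adjmx {n} (v : 'cV[C]_n) : (vnorm2 v)%:C = (adjmx v *m v) 0 0.
Proof.
by rewrite adjmx_mul_col rmorph_sum /=; apply: eq_bigr => i _; rewrite normc_sqr mulrC.
Qed.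

Lemma vnorm2_eq0 {n} (v : 'cV[C]_n) : vnorm2 v = 0 -> v = 0.
Proof.
move=> /psumr_eq0P v0; apply/matrixP => i j; rewrite (ord1 j) mxE.
apply: ComplexField.Normc.eq0_normc; apply/eqP; rewrite -sqrf_eq0.
by apply/eqP/v0 => // l _; rewrite exprn_ge0 ?normc_ge0.
Qed.

Lemma vnorm_eq0 {n} (v : 'cV[C]_n) : vnorm v = 0 -> v = 0.
Proof. by move=> v0; apply: vnorm2_eq0; rewrite -sqr_vnorm v0 expr0n. Qed.

Lemma vnorm2_0 {n} : vnorm2 (0 : 'cV[C]_n) = 0.
Proof.
by apply: big1 => i _; rewrite mxE ComplexField.Normc.normc0 expr0n.
Qed.

Lemma vnorm0 {n} : vnorm (0 : 'cV[C]_n) = 0.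
Proof. by rewrite /vnorm vnorm2_0 sqrtr0. Qed.

Lemma vnormZ {n} (a : C) (v : 'cV[C]_n) : vnorm (a *: v) = normc a * vnorm v.
Proof.
rewrite /vnorm /vnorm2.
under eq_bigr => i _ do rewrite mxE ComplexField.Normc.normcM exprMn.
by rewrite -mulr_sumr sqrtrM ?exprn_ge0 ?normc_ge0 // sqrtr_sqr ger0_norm ?normc_ge0.
Qed.

Lemma vnormN {n} (v : 'cV[C]_n) : vnorm (- v) = vnorm v.
Proof.
by rewrite -scaleN1r vnormZ -(rmorphN1 (real_complex R)) normc_real normrN1 mul1r.
Qed.

Lemma normc_coord_le {n} (v : 'cV[C]_n) i : normc (v i 0) <= vnorm v.
Proof.
rewrite -(ler_sqr (normc_ge0 _) (vnorm_ge0 v)) sqr_vnorm /vnorm2 (bigD1 i) //=.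
by rewrite lerDl; apply: sumr_ge0 => j _; rewrite exprn_ge0 ?normc_ge0.
Qed.

Lemma normc_adjmx_mul_le {n} (u v : 'cV[C]_n) :
  normc ((adjmx u *m v) 0 0) <= vnorm u * vnorm v.
Proof.
rewrite adjmx_mul_col; apply: le_trans (normc_sum_le _ _) _.
under eq_bigr => i _ do rewrite ComplexField.Normc.normcM normc_conj.
exact: sum_mul_le_sqrt.
Qed.

Lemma vnormD {n} (u v : 'cV[C]_n) : vnorm (u + v) <= vnorm u + vnorm v.
Proof.
rewrite -(ler_sqr (vnorm_ge0 _)) ?nnegrE ?addr_ge0 ?vnorm_ge0 //.
rewrite sqrrD !sqr_vnorm.
apply: (@le_trans _ _ (\sum_i (normc (u i 0) + normc (v i 0)) ^+ 2)).
  apply: ler_sum => i _; rewrite mxE ler_sqr ?nnegrE ?addr_ge0 ?normc_ge0 //.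
  exact: le_normcD.
under eq_bigr => i _ do rewrite sqrrD.
rewrite !big_split /= -/(vnorm2 u) -/(vnorm2 v) lerD2r lerD2l -mulr2n.
by rewrite lerMn2r /=; exact: sum_mul_le_sqrt.
Qed.

Lemma vnorm_sum {n} {I : finType} (P : pred I) (F : I -> 'cV[C]_n) :
  vnorm (\sum_(i | P i) F i) <= \sum_(i | P i) vnorm (F i).
Proof.
apply: (big_ind2 (fun u a => vnorm u <= a)) => [|u a v b ua vb|//].
  by rewrite vnorm0.
exact: le_trans (vnormD u v) (lerD ua vb).
Qed.

Lemma vnorm_mulmx_le {m n} (A : 'M[C]_(m, n)) (v : 'cV[C]_n) :
  vnorm (A *m v) <= specnorm A * vnorm v.
Proof.
have specnorm_ub (w : 'cV[C]_n) : vnorm w <= 1 -> vnorm (A *m w) <= specnorm A.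
  move=> w1; apply: ub_le_sup; last by exists w.
  exists (Num.sqrt (\sum_i (\sum_j normc (A i j)) ^+ 2)) => _ [u u1 <-].
  apply: ler_wsqrtr; apply: ler_sum => i _.
  rewrite ler_sqr ?nnegrE ?normc_ge0 ?sumr_ge0 // => [|j _]; last exact: normc_ge0.
  rewrite mxE; apply: le_trans (normc_sum_le _ _) _; apply: ler_sum => j _.
  rewrite ComplexField.Normc.normcM -[leRHS]mulr1 ler_wpM2l ?normc_ge0 //.
  by apply: le_trans u1; exact: normc_coord_le.
have [v0|v_neq0] := eqVneq (vnorm v) 0.
  by rewrite v0 mulr0 (vnorm_eq0 _ v0) mulmx0 vnorm0.
have hv : 0 <= (vnorm v)^-1 by rewrite invr_ge0 vnorm_ge0.
have := specnorm_ub ((vnorm v)^-1%:C *: v).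
rewrite -scalemxAr !vnormZ normc_real ger0_norm // mulVf // => /(_ (lexx _)).
by rewrite mulrC ler_pdivrMr // lt_def v_neq0 vnorm_ge0.
Qed.

Lemma vnorm2_sub_proj {L d} (B : 'M[C]_(L, d)) (r : 'cV[C]_L) :
  adjmx B *m B = 1%:M ->
  vnorm2 (r - B *m (adjmx B *m r)) = vnorm2 r - vnorm2 (adjmx B *m r).
Proof.
move=> BB1; apply: (@complexI R); rewrite rmorphB /= !vnorm2_adjmx.
set w := adjmx B *m r.
have e1 : adjmx r *m (B *m w) = adjmx w *m w by rewrite mulmxA /w adjmxM adjmxK.
have e2 : (adjmx w *m adjmx B) *m r = adjmx w *m w by rewrite -mulmxA.
have e3 : (adjmx w *m adjmx B) *m (B *m w) = adjmx w *m w.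
  by rewrite -mulmxA (mulmxA (adjmx B)) BB1 mul1mx.
by rewrite adjmxB adjmxM mulmxBl !mulmxBr e1 e2 e3 !mxE subrr subr0.
Qed.

Lemma sum_blk_idx {M d} {V : nmodType} (F : 'I_(M * d) -> V) : (0 < d)%N ->
  \sum_k F k = \sum_(l < M) \sum_(j < d) F (blk_idx l j).
Proof.
move=> d_gt0; rewrite pair_big /=.
have divP (k : 'I_(M * d)) : (k %/ d < M)%N by rewrite ltn_divLR.
have modP (k : 'I_(M * d)) : (k %% d < d)%N by rewrite ltn_pmod.
rewrite (reindex (fun p : 'I_M * 'I_d => blk_idx p.1 p.2)) //.
exists (fun k => (Ordinal (divP k), Ordinal (modP k))).
  move=> [l j] _; congr (_, _); apply: val_inj => /=.
    by rewrite divnMDl // divn_small ?addn0.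
  by rewrite modnMDl modn_small.
by move=> k _; apply: val_inj; rewrite /= -divn_eq.
Qed.

Lemma mulmx_colblk {L M d} (D : 'M[C]_(L, M * d)) (z : 'cV[C]_(M * d)) :
  (0 < d)%N -> D *m z = \sum_l colblk D l *m vblk z l.
Proof.
move=> d_gt0; apply/matrixP => i j; rewrite (ord1 j) summxE mxE sum_blk_idx //.
by apply: eq_bigr => l _; rewrite mxE; apply: eq_bigr => k _; rewrite !mxE.
Qed.

Section BlockCorrelation.
Context {L M d k : nat} {D : 'M[C]_(L, M * d)} {c : R} {S : {set 'I_M}}.
Hypothesis blocks_orthonormal : forall l, adjmx (colblk D l) *m colblk D l = 1%:M.
Hypothesis coherence : forall j t : 'I_M, j != t ->
  specnorm (adjmx (colblk D j) *m colblk D t) <= c.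
Hypothesis c_ge0 : 0 <= c.
Hypothesis card_S : (#|S| <= k)%N.
Context {z : 'I_M -> 'cV[C]_d}.
Hypothesis z_supp : forall t, t \notin S -> z t = 0.

Local Notation Dc := (colblk D).
Let r := \sum_t Dc t *m z t.
Let a t := vnorm (z t).
Let g j := vnorm (adjmx (Dc j) *m r).
Let m := \big[Num.max/0]_t a t.

Let a_supp t : t \notin S -> a t = 0.
Proof. by move=> tS; rewrite /a z_supp // vnorm0. Qed.

Lemma correlation_err j : vnorm (adjmx (Dc j) *m r - z j) <= c * (\sum_t a t - a j).
Proof.
have -> : adjmx (Dc j) *m r - z j =
    \sum_(t | t != j) (adjmx (Dc j) *m Dc t) *m z t.
  rewrite /r mulmx_sumr (bigD1 j) //= mulmxA blocks_orthonormal mul1mx.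
  by rewrite addrAC subrr add0r; apply: eq_bigr => t _; rewrite mulmxA.
rewrite [\sum_t a t](bigD1 j) //= addrAC subrr add0r mulr_sumr.
apply: le_trans (vnorm_sum _ _) _; apply: ler_sum => t tj.
apply: le_trans (vnorm_mulmx_le _ _) _; apply: ler_wpM2r; first exact: vnorm_ge0.
by apply: coherence; rewrite eq_sym.
Qed.

Lemma correlation_le j : g j <= a j + c * (\sum_t a t - a j).
Proof.
have := vnormD (adjmx (Dc j) *m r - z j) (z j); rewrite subrK.
have := correlation_err j; rewrite /g /a; lra.
Qed.

Lemma correlation_ge j : a j - c * (\sum_t a t - a j) <= g j.
Proof.
have := vnormD (adjmx (Dc j) *m r) (- (adjmx (Dc j) *m r - z j)).
rewrite vnormN opprB addrC subrK.
have := correlation_err j; rewrite /g /a; lra.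
Qed.

Lemma sum_blocks_le : \sum_t a t <= k%:R * m.
Proof.
rewrite (bigID (mem S)) /= [X in _ + X]big1 ?addr0 => [|t /a_supp //].
apply: le_trans (_ : \sum_(t in S) m <= _).
  by apply: ler_sum => t _; exact: le_bigmax.
rewrite sumr_const -[m *+ _]mulr_natl; apply: ler_wpM2r; last by rewrite ler_nat.
exact: bigmax_ge_id.
Qed.

Lemma max_block_in_support : r != 0 -> 0 < m /\ exists2 s, s \in S & a s = m.
Proof.
move=> r_neq0.
have [t0 zt0] : exists t, z t != 0.
  apply/existsP; apply: contraR r_neq0; rewrite negb_exists => /forallP z0.
  by rewrite /r big1 // => t _; move/negPn/eqP: (z0 t) => ->; rewrite mulmx0.
have m_gt0 : 0 < m.
  apply: lt_le_trans (le_bigmax _ _ t0); rewrite lt_def vnorm_ge0 andbT.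
  by apply: contra zt0 => /eqP/vnorm_eq0 ->.
have [s _ as_m] := @eq_bigmax _ _ _ 0 t0 xpredT a isT (fun i _ => vnorm_ge0 _).
split=> //; exists s; last by rewrite /m as_m.
by apply: contraLR m_gt0 => /a_supp as0; rewrite -leNgt /m as_m as0.
Qed.

Lemma max_block_correlation_ge s : a s = m -> m * (1 - c * (k%:R - 1)) <= g s.
Proof.
move=> as_m; apply: le_trans (correlation_ge s); rewrite as_m.
have := ler_wpM2l c_ge0 sum_blocks_le; lra.
Qed.

Lemma correlation_off_support_lt j : r != 0 -> c * (2 * k%:R - 1) < 1 ->
  j \notin S -> exists2 s, s \in S & g j < g s.
Proof.
move=> r_neq0 hc jS; have [m_gt0 [s sS as_m]] := max_block_in_support r_neq0.
exists s => //; apply: lt_le_trans (max_block_correlation_ge _ as_m).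
have := correlation_le j; rewrite a_supp // add0r subr0 => gj_le.
apply: le_lt_trans gj_le _; apply: le_lt_trans (ler_wpM2l c_ge0 sum_blocks_le) _.
have : 0 < m * (1 - c * (2 * k%:R - 1)) by rewrite mulr_gt0 ?subr_gt0.
nra.
Qed.

Lemma max_correlation_ge i : (forall j, g j <= g i) -> c * (k%:R - 1) < 1 ->
  vnorm2 r * (1 - (k%:R - 1) * c) <= k%:R * g i ^+ 2.
Proof.
move=> i_max hc.
have [r0|r_neq0] := eqVneq r 0.
  by rewrite r0 vnorm2_0 mul0r mulr_ge0 ?ler0n ?sqr_ge0.
have [_ [s _ as_m]] := max_block_in_support r_neq0.
have r2_le : vnorm2 r <= \sum_t g t * a t.
  rewrite -[vnorm2 r]ger0_norm ?vnorm2_ge0 // -normc_real vnorm2_adjmx.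
  rewrite {2}/r mulmx_sumr summxE; apply: le_trans (normc_sum_le _ _) _.
  apply: ler_sum => t _; rewrite mulmxA -[adjmx r *m Dc t]adjmxK adjmxM adjmxK.
  exact: normc_adjmx_mul_le.
have sum_le : \sum_t g t * a t <= g i * (k%:R * m).
  apply: le_trans (ler_wpM2l (vnorm_ge0 _) sum_blocks_le).
  rewrite mulr_sumr; apply: ler_sum => t _.
  by apply: ler_wpM2r; [exact: vnorm_ge0 | exact: i_max].
have := max_block_correlation_ge _ as_m; have := i_max s.
have : 0 <= k%:R * g i by rewrite mulr_ge0 ?ler0n ?vnorm_ge0.
have : 0 <= 1 - (k%:R - 1) * c by rewrite mulrC subr_ge0 ltW.
have : 0 <= g i := vnorm_ge0 _.
nra.
Qed.

End BlockCorrelation.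

Section BMP.
Context {L M d k : nat} {D : 'M[C]_(L, M * d)} {x0 : 'cV[C]_(M * d)}.
Context {idx : nat -> 'I_M} {r : nat -> 'cV[C]_L} {c : R} {S : {set 'I_M}}.
Hypothesis d_gt0 : (0 < d)%N.
Hypothesis k_gt0 : (0 < k)%N.
Hypothesis blocks_orthonormal : forall l, adjmx (colblk D l) *m colblk D l = 1%:M.
Hypothesis coherence : forall j t : 'I_M, j != t ->
  specnorm (adjmx (colblk D j) *m colblk D t) <= c.
Hypothesis c_ge0 : 0 <= c.
Hypothesis sparsity : c * (2 * k%:R - 1) < 1.
Hypothesis card_S : (#|S| <= k)%N.
Hypothesis x0_supp : forall t, t \notin S -> vblk x0 t = 0.
Hypothesis bmp : BMP_run D (D *m x0) idx r.

Let supported (z : 'I_M -> 'cV[C]_d) := forall t, t \notin S -> z t = 0.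

Lemma bmp_picks_support l z : (0 < l)%N -> supported z ->
  r l.-1 = \sum_t colblk D t *m z t -> r l.-1 != 0 -> idx l \in S.
Proof.
move=> l_gt0 z_supp r_def r_neq0; have [idx_max _] := bmp.2 l l_gt0.
apply: contraT => idxS; rewrite r_def in r_neq0 idx_max.
have [s _ lt_s] := correlation_off_support_lt blocks_orthonormal coherence c_ge0
  card_S z_supp (idx l) r_neq0 sparsity idxS.
by have := idx_max s; rewrite leNgt lt_s.
Qed.

Lemma bmp_residual_in_span l :
  exists2 z, supported z & r l = \sum_t colblk D t *m z t.
Proof.
elim: l => [|l [z z_supp r_def]].
  by exists (vblk x0) => //; rewrite bmp.1; exact: mulmx_colblk.
have [_ r_next] := bmp.2 l.+1 isT; rewrite /= in r_next.
have [r0|r_neq0] := eqVneq (r l) 0.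
  exists (fun=> 0) => //; rewrite r_next r0 !mulmx0 subr0.
  by rewrite big1 // => t _; rewrite mulmx0.
have iS := bmp_picks_support l.+1 z isT z_supp r_def r_neq0.
set i := idx l.+1 in r_next iS *; set w := adjmx (colblk D i) *m r l in r_next *.
exists (fun t => if t == i then z t - w else z t).
  by move=> t tS; rewrite ifN ?z_supp //; apply: contraNneq tS => ->.
rewrite r_next r_def (bigD1 i) //= [RHS](bigD1 i) //= eqxx mulmxBr addrAC.
by congr (_ + _); apply: eq_bigr => t /negPf ->.
Qed.

Lemma bmp_residual_contracts l :
  vnorm2 (r l.+1) <= (1 - (1 - (k%:R - 1) * c) / k%:R) * vnorm2 (r l).
Proof.
have [i_max r_next] := bmp.2 l.+1 isT; rewrite /= in i_max r_next.
have [z z_supp r_def] := bmp_residual_in_span l.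
have hc : c * (k%:R - 1) < 1.
  apply: le_lt_trans sparsity; rewrite ler_wpM2l //.
  have : (1 : R) <= k%:R by rewrite ler1n.
  lra.
rewrite r_def in i_max.
have := max_correlation_ge blocks_orthonormal coherence c_ge0 card_S z_supp _ i_max hc.
rewrite -r_def sqr_vnorm r_next vnorm2_sub_proj //.
set q := 1 - (k%:R - 1) * c => r_le.
by rewrite mulrBl mul1r lerD2l lerN2 mulrAC ler_pdivrMr ?ltr0n //; lra.
Qed.

Lemma bmp_residual_geometric l :
  vnorm2 (r l) <= (1 - (1 - (k%:R - 1) * c) / k%:R) ^+ l * vnorm2 (r 0).
Proof.
have beta_ge0 : 0 <= 1 - (1 - (k%:R - 1) * c) / k%:R.
  have k_ge1 : (1 : R) <= k%:R by rewrite ler1n.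
  rewrite subr_ge0 ler_pdivrMr ?mul1r; last by lra.
  have : 0 <= (k%:R - 1) * c by rewrite mulr_ge0 // subr_ge0.
  lra.
elim: l => [|l IH]; first by rewrite expr0 mul1r.
rewrite exprS -mulrA; apply: le_trans (bmp_residual_contracts l) _.
exact: ler_wpM2l.
Qed.

End BMP.

Lemma blocksize_gt0 {L M d} (D : 'M[C]_(L, M * d)) :
  0 < block_coherence D -> (0 < d)%N.
Proof.
rewrite lt0n; apply: contraTneq => d0; rewrite -leNgt /block_coherence.
have -> : (d%:R : R)^-1 = 0 by rewrite d0 invr0.
by apply: bigmax_le => // l _; apply: bigmax_le => // t _; rewrite mul0r.
Qed.

Lemma specnorm_offdiag_le {L M d} (D : 'M[C]_(L, M * d)) : (0 < d)%N ->
  forall j t : 'I_M, j != t ->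
  specnorm (adjmx (colblk D j) *m colblk D t) <= d%:R * block_coherence D.
Proof.
move=> d_gt0 j t jt; rewrite -ler_pdivrMl ?ltr0n //.
apply: le_trans (le_bigmax _ _ j).
by apply: (le_bigmax_cond _ (P := fun t => t != j)); rewrite eq_sym.
Qed.

End ComplexVectors.

Lemma coherence_sparsity_bound {R : realFieldType} {k d mu : R} :
  0 < mu -> k * d < (mu^-1 + d) / 2 -> d * mu * (2 * k - 1) < 1.
Proof.
move=> mu_gt0 h; have : (2 * k - 1) * d < mu^-1 by lra.
rewrite -(ltr_pM2r mu_gt0) mulVf ?gt_eqF // => lt1.
by rewrite (_ : _ * _ = (2 * k - 1) * d * mu) //; ring.
Qed.

Theorem theorem4 (R : realType) (Rb M d k : nat)
    (D : 'M[R[i]]_(Rb * d, M * d)) (x0 : 'cV[R[i]]_(M * d))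
    (idx : nat -> 'I_M) (r : nat -> 'cV[R[i]]_(Rb * d)) :
  (0 < k)%N ->
  (forall l : 'I_M, adjmx (colblk D l) *m colblk D l = 1%:M) ->
  (forall g : 'cV[R[i]]_(M * d), g != 0 -> block_sparse (2 * k) g -> D *m g != 0) ->
  block_sparse k x0 ->
  0 < block_coherence D ->
  (k * d)%:R < ((block_coherence D)^-1 + d%:R) / 2 ->
  BMP_run D (D *m x0) idx r ->
  (forall l : nat, (0 < l)%N -> r l.-1 != 0 -> 0 < vnorm (vblk x0 (idx l))) /\
  (forall l : nat,
     vnorm2 (r l) <=
       (1 - (1 - (k%:R - 1) * d%:R * block_coherence D) / k%:R) ^+ l
       * vnorm2 (r 0%N)).
Proof.
move=> k_gt0 orthonormal _ x0_sparse mu_gt0 sparsity bmp.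
have d_gt0 := blocksize_gt0 D mu_gt0.
pose S := [set l | vnorm (vblk x0 l) != 0].
have card_S : (#|S| <= k)%N by rewrite cardsE.
have x0_supp t : t \notin S -> vblk x0 t = 0.
  by rewrite inE negbK => /eqP/vnorm_eq0.
have c_ge0 : 0 <= d%:R * block_coherence D by rewrite mulr_ge0 ?ler0n ?ltW.
rewrite natrM in sparsity; have {}sparsity := coherence_sparsity_bound mu_gt0 sparsity.
have coherence := specnorm_offdiag_le D d_gt0.
split=> [l l_gt0 r_neq0 | l].
  have [z z_supp r_def] := bmp_residual_in_span d_gt0 orthonormal coherence c_ge0
    sparsity card_S x0_supp bmp l.-1.
  have := bmp_picks_support orthonormal coherence c_ge0 sparsity card_S bmp
    l z l_gt0 z_supp r_def r_neq0.
  by rewrite inE lt_def vnorm_ge0 andbT.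
rewrite -mulrA; exact: (bmp_residual_geometric d_gt0 k_gt0 orthonormal coherence
  c_ge0 sparsity card_S x0_supp bmp).
Qed.
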